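(* Let $R$ be a commutative Noetherian ring with unity such that the number of vertices of $\Gamma_E(R)$ is finite and greater than $2$. Then for any vertex $[y]$ of maximal degree in $\Gamma_E(R)$, $\operatorname{ann}(y)$ is a maximal element of $\mathfrak F=\{\operatorname{ann}(z)\mid 0\neq z\in R\}$, and hence is an associated prime of $R$.
   Context: For $x,y\in R$ write $x\sim y$ iff $\operatorname{ann}(x)=\operatorname{ann}(y)$; $[x]$ denotes the equivalence class of $x$. Let $Z^*(R)$ be the set of nonzero zero divisors of $R$. The graph $\Gamma_E(R)$ is the simple graph whose vertices are the classes $[x]$ with $x\in Z^*(R)$, two distinct vertices $[x],[y]$ being adjacent iff $xy=0$. The degree of a vertex is the number of vertices adjacent to it. An associated prime of $R$ is a prime ideal of the form $\operatorname{ann}(y)$, $y\in R$. *)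

From mathcomp Require Import all_boot all_order all_algebra.
From mathcomp Require Import boolp.
Set Implicit Arguments. Unset Strict Implicit. Unset Printing Implicit Defensive.
Import GRing.Theory.
Local Open Scope ring_scope.

Section Defs.
Variable R : comNzRingType.

Definition is_ideal (I : R -> Prop) : Prop :=
  [/\ I 0, (forall x y, I x -> I y -> I (x + y)) & (forall r x, I x -> I (r * x))].

Definition noetherian : Prop :=
  forall I : nat -> R -> Prop,
    (forall n, is_ideal (I n)) ->
    (forall n x, I n x -> I n.+1 x) ->
    exists N, forall n, (N <= n)%N -> forall x, I n x <-> I N x.

Definition prime_ideal (P : R -> Prop) : Prop :=
  [/\ is_ideal P, ~ P 1 & forall a b, P (a * b) -> P a \/ P b].

Definition ann (x : R) : R -> Prop := fun r => r * x = 0.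

Definition ann_equiv (x y : R) : Prop := forall r, ann x r <-> ann y r.

Definition nz_zdiv (x : R) : Prop := x != 0 /\ exists z : R, z != 0 /\ x * z = 0.

(* s is a list of representatives of the vertices of Gamma_E(R):
   one element of Z^*(R) for each class [x], x in Z^*(R). *)
Definition vertex_reps (s : seq R) : Prop :=
  [/\ uniq s,
      (forall x, x \in s -> nz_zdiv x),
      (forall z, nz_zdiv z -> exists2 x, x \in s & ann_equiv z x) &
      (forall x y, x \in s -> y \in s -> ann_equiv x y -> x = y)].

Definition vdeg (s : seq R) (y : R) : nat :=
  count (fun x => `[< ~ ann_equiv x y >] && (x * y == 0)) s.

Definition maximal_in_F (y : R) : Prop :=
  y != 0 /\ forall z : R, z != 0 -> (forall r, ann y r -> ann z r) ->
                          (forall r, ann z r -> ann y r).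

Definition associated_prime (P : R -> Prop) : Prop :=
  prime_ideal P /\ exists w : R, forall r, P r <-> ann w r.

End Defs.

(* Write A(x) for the number of vertices [r] with r x = 0 (counting [x] itself when x^2 = 0),
   so that deg [x] = A(x) - [x^2 = 0].  If ann(y) is contained in ann(w), then A(w) - A(y) counts
   the classes in ann(w) \ ann(y); maximality of deg [y] therefore allows at most one such class,
   and only when w^2 = 0 and y^2 <> 0.  For a proper inclusion ann(y) < ann(z) this rigidity forces
   z y = 0, ann(z) ann(y) = 0, and every nonzero zero divisor to be equivalent to y or to z, so
   that Gamma_E(R) would have only two vertices. *)
From mathcomp Require Import all_boot all_order all_algebra.
From mathcomp Require Import boolp.
From mathcomp Require Import zify.
Set Implicit Arguments. Unset Strict Implicit. Unset Printing Implicit Defensive.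
Import GRing.Theory.
Local Open Scope ring_scope.

Section Annihilators.
Variable R : comNzRingType.
Implicit Types a b r t v w y : R.

Definition ann_le a b : Prop := forall r, ann a r -> ann b r.

Definition ann_pred w : pred R := fun r => r * w == 0.

Definition ann_excess w v : pred R := fun r => (r * w == 0) && (r * v != 0).

Lemma ann_equiv_sym a b : ann_equiv a b -> ann_equiv b a.
Proof. by move=> eab r; split=> /eab. Qed.

Lemma ann_equiv_trans a b c : ann_equiv a b -> ann_equiv b c -> ann_equiv a c.
Proof. by move=> eab ebc r; split=> [/eab/ebc | /ebc/eab]. Qed.

Lemma ann_equiv_le a b : ann_le a b -> ann_le b a -> ann_equiv a b.
Proof. by move=> lab lba r; split=> [/lab | /lba]. Qed.

Lemma ann_equiv_mul0 t r w : ann_equiv t r -> (t * w == 0) = (r * w == 0).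
Proof. by move=> e; rewrite ![_ * w]mulrC; apply/eqP/eqP => /e. Qed.

Lemma ann_excess_equiv w v t r : ann_equiv t r -> ann_excess w v t = ann_excess w v r.
Proof. by move=> e; rewrite /ann_excess !(ann_equiv_mul0 _ e). Qed.

Lemma ann_excess_nz_zdiv w v t : w != 0 -> ann_excess w v t -> nz_zdiv t.
Proof.
move=> wn /andP[/eqP tw tv]; split; last by exists w.
by apply: contraNneq tv => ->; rewrite mul0r.
Qed.

Lemma ann_le_nz_zdiv y w : nz_zdiv y -> w != 0 -> ann_le y w -> nz_zdiv w.
Proof.
move=> [_ [b [bn yb]]] wn le_yw; split=> //; exists b; split=> //.
by rewrite mulrC; apply: le_yw; rewrite /ann mulrC.
Qed.

Lemma count_ann_le (s : seq R) v w : ann_le v w ->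
  count (ann_pred w) s = (count (ann_pred v) s + count (ann_excess w v) s)%N.
Proof.
move=> le_vw; elim: s => //= r s ->; rewrite /ann_pred /ann_excess addnACA.
by case: (eqVneq (r * v) 0) => [/(le_vw r) -> | _]; rewrite ?eqxx ?andbT.
Qed.

Lemma maximal_ann_prime y : maximal_in_F y -> prime_ideal (ann y).
Proof.
move=> [yn maxy]; split.
- split=> [|a b ha hb|r a ha]; rewrite /ann ?mul0r //.
    by rewrite mulrDl ha hb addr0.
  by rewrite -mulrA ha mulr0.
- by rewrite /ann mul1r; apply/eqP.
- move=> a b hab; case: (eqVneq (b * y) 0) => [|byn]; [by right | left].
  apply: (maxy (b * y) byn _ a); last by rewrite /ann mulrA.
  by move=> q hq; rewrite /ann mulrCA hq mulr0.
Qed.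

End Annihilators.

Section VertexReps.
Variable R : comNzRingType.
Variable s : seq R.
Hypothesis hs : vertex_reps s.
Implicit Types r t v w x y z : R.

Lemma vertex_rep_exists t : nz_zdiv t -> exists2 r, r \in s & ann_equiv t r.
Proof. by case: hs => _ _ + _; apply. Qed.

Lemma vertex_rep_inj x r : x \in s -> r \in s -> ann_equiv x r -> x = r.
Proof. by case: hs => _ _ _; apply. Qed.

Lemma vdeg_add_sq x : nz_zdiv x ->
  (vdeg s x + ann_pred x x = count (ann_pred x) s)%N.
Proof.
move=> x_zdiv; have [r0 r0s e0] := vertex_rep_exists x_zdiv.
pose Ex := fun r => `[< ann_equiv r x >].
have class_x : count (predI Ex (ann_pred x)) s = ann_pred x x.
  rewrite (eq_in_count (a2 := fun r => (r == r0) && ann_pred x x)); last first.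
    move=> r rs /=; have -> : Ex r = (r == r0).
      apply/asboolP/eqP => [erx | ->]; last exact: ann_equiv_sym.
      exact: vertex_rep_inj rs r0s (ann_equiv_trans erx e0).
    case: (eqVneq r r0) => [-> | //].
    by rewrite /ann_pred -(ann_equiv_mul0 _ e0).
  case: (ann_pred x x).
    under eq_count => r do rewrite andbT.
    by rewrite (count_uniq_mem _ (_ : uniq s)) ?r0s //; case: hs.
  by under eq_count => r do rewrite andbF; rewrite count_pred0.
have := count_predC Ex (filter (ann_pred x) s).
rewrite size_filter !count_filter class_x addnC => <-.
by congr (_ + _)%N; apply: eq_count => r /=; rewrite asbool_neg andbC.
Qed.

Lemma count_ann_excess_gt0 w v t : w != 0 -> ann_excess w v t ->
  (0 < count (ann_excess w v) s)%N.
Proof.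
move=> wn ex_t; have [r rs e] := vertex_rep_exists (ann_excess_nz_zdiv wn ex_t).
by rewrite -has_count; apply/hasP; exists r; rewrite -?(ann_excess_equiv _ _ e).
Qed.

Lemma count_ann_excess_gt1 w v t1 t2 : w != 0 ->
  ann_excess w v t1 -> ann_excess w v t2 -> ~ ann_equiv t1 t2 ->
  (1 < count (ann_excess w v) s)%N.
Proof.
move=> wn ex1 ex2 ne12.
have [r1 r1s e1] := vertex_rep_exists (ann_excess_nz_zdiv wn ex1).
have [r2 r2s e2] := vertex_rep_exists (ann_excess_nz_zdiv wn ex2).
have r12 : r1 != r2.
  apply/eqP => er; apply: ne12; apply: ann_equiv_trans e1 _.
  by rewrite er; apply: ann_equiv_sym.
rewrite -size_filter (@uniq_leq_size _ [:: r1; r2]) //=.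
  by rewrite inE r12.
move=> r; rewrite !inE mem_filter => /orP[] /eqP ->.
  by rewrite r1s andbT -(ann_excess_equiv _ _ e1).
by rewrite r2s andbT -(ann_excess_equiv _ _ e2).
Qed.

Lemma size_vertex_reps_le2 y z : nz_zdiv y -> nz_zdiv z ->
  (forall x, nz_zdiv x -> ann_equiv x y \/ ann_equiv x z) -> (size s <= 2)%N.
Proof.
move=> y_zdiv z_zdiv yz_classes.
have [ry rys ey] := vertex_rep_exists y_zdiv.
have [rz rzs ez] := vertex_rep_exists z_zdiv.
have [s_uniq s_zdiv _ _] := hs.
apply: (@uniq_leq_size _ _ [:: ry; rz]) => // x xs.
rewrite !inE; have [exy | exz] := yz_classes x (s_zdiv x xs).
  by rewrite (vertex_rep_inj xs rys (ann_equiv_trans exy ey)) eqxx.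
by rewrite (vertex_rep_inj xs rzs (ann_equiv_trans exz ez)) eqxx orbT.
Qed.

End VertexReps.

Section MaximalDegree.
Variable R : comNzRingType.
Variable s : seq R.
Hypothesis hs : vertex_reps s.
Variable y : R.
Hypothesis hy : nz_zdiv y.
Hypothesis hmax : forall z : R, nz_zdiv z -> (vdeg s z <= vdeg s y)%N.
Implicit Types a b q t u w x z : R.

Lemma count_ann_excess_bound w : w != 0 -> ann_le y w ->
  (count (ann_excess w y) s + ann_pred y y <= ann_pred w w)%N.
Proof.
move=> wn le_yw; have w_zdiv := ann_le_nz_zdiv hy wn le_yw.
have := hmax w_zdiv; have := vdeg_add_sq hs w_zdiv; have := vdeg_add_sq hs hy.
rewrite (count_ann_le s le_yw); lia.
Qed.

Lemma ann_excess_sqr w t : w != 0 -> ann_le y w -> ann_excess w y t ->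
  w * w = 0 /\ y * y != 0.
Proof.
move=> wn le_yw ex_t; have := count_ann_excess_bound wn le_yw.
have := count_ann_excess_gt0 hs wn ex_t; rewrite /ann_pred.
by case: eqP; case: eqP => //=; lia.
Qed.

Lemma ann_excess_equiv_class w t1 t2 : w != 0 -> ann_le y w ->
  ann_excess w y t1 -> ann_excess w y t2 -> ann_equiv t1 t2.
Proof.
move=> wn le_yw ex1 ex2; case: (pselect (ann_equiv t1 t2)) => // ne12.
have := count_ann_excess_bound wn le_yw.
have := count_ann_excess_gt1 hs wn ex1 ex2 ne12.
by case: (ann_pred w w); case: (ann_pred y y) => /=; lia.
Qed.

Lemma ann_excess_maximal w w' t : w != 0 -> ann_le y w -> ann_excess w y t ->
  w' != 0 -> ann_le w w' -> ann_le w' w.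
Proof.
move=> wn le_yw ex_t w'n le_ww' u uw'; case: (eqVneq (u * w) 0) => // uw.
have le_yw' : ann_le y w' by move=> r /le_yw /le_ww'.
have ex'_t : ann_excess w' y t.
  by case/andP: ex_t => /eqP /le_ww' tw' ty; rewrite /ann_excess tw' eqxx.
have ex'_u : ann_excess w' y u.
  rewrite /ann_excess uw' eqxx /=; apply: contra uw => /eqP /le_yw ->.
  by rewrite eqxx.
have e_tu := ann_excess_equiv_class w'n le_yw' ex'_t ex'_u.
by case/andP: ex_t; rewrite (ann_equiv_mul0 _ e_tu) (negbTE uw).
Qed.

Section ProperAnnihilator.
Variables z t0 : R.
Hypothesis z_neq0 : z != 0.
Hypothesis le_yz : ann_le y z.
Hypothesis t0_excess : ann_excess z y t0.

Lemma mulzz : z * z = 0.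
Proof. by case: (ann_excess_sqr z_neq0 le_yz t0_excess). Qed.

Lemma mulyy_neq0 : y * y != 0.
Proof. by case: (ann_excess_sqr z_neq0 le_yz t0_excess). Qed.

Lemma mulzy : z * y = 0.
Proof.
case: (eqVneq (z * y) 0) => // zy; exfalso.
have [_ [b [bn yb]]] := hy.
have bz : b * z = 0 by apply: le_yz; rewrite /ann mulrC.
have e : ann_equiv z (z + b).
  apply: (ann_excess_equiv_class z_neq0 le_yz); rewrite /ann_excess.
    by rewrite mulzz eqxx zy.
  by rewrite !mulrDl mulzz bz add0r eqxx /= (mulrC b) yb addr0.
have le_zb : ann_le z b.
  by move=> q qz; have := proj1 (e q) qz; rewrite /ann mulrDr qz add0r.
have le_bz := ann_excess_maximal z_neq0 le_yz t0_excess bn le_zb.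
by move: zy; rewrite mulrC (le_bz y yb) eqxx.
Qed.

Lemma ann_excess_equiv_y t : ann_excess z y t -> ann_equiv t y.
Proof.
move=> ex_t; apply: (ann_excess_equiv_class z_neq0 le_yz ex_t).
by rewrite /ann_excess (mulrC y) mulzy eqxx mulyy_neq0.
Qed.

Lemma mul_ann_y_ann_z a q : a * y = 0 -> q * z = 0 -> q * a = 0.
Proof.
move=> ay qz; case: (eqVneq (q * y) 0) => qy.
  have e : ann_equiv (y + q) y.
    apply: ann_excess_equiv_y; rewrite /ann_excess !mulrDl (mulrC y) mulzy qz.
    by rewrite add0r eqxx qy addr0 mulyy_neq0.
  by have := proj2 (e a) ay; rewrite /ann mulrDr ay add0r mulrC.
have e : ann_equiv q y by apply: ann_excess_equiv_y; rewrite /ann_excess qz eqxx.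
by have := proj2 (e a) ay; rewrite /ann mulrC.
Qed.

Lemma ann_y_equiv_z a : a != 0 -> a * y = 0 -> ann_equiv a z.
Proof.
move=> an ay; have le_za : ann_le z a by move=> q; apply: mul_ann_y_ann_z.
exact: ann_equiv_le (ann_excess_maximal z_neq0 le_yz t0_excess an le_za) le_za.
Qed.

Lemma nz_zdiv_mulz x : nz_zdiv x -> x * z = 0.
Proof.
move=> [xn [b [bn xb]]]; case: (eqVneq (x * z) 0) => // xz; exfalso.
have xz_equiv : ann_equiv (x * z) z.
  by apply: ann_y_equiv_z; rewrite // -mulrA mulzy mulr0.
have bz : b * z = 0.
  by apply: (proj1 (xz_equiv b)); rewrite /ann mulrA (mulrC b) xb mul0r.
case: (eqVneq (b * y) 0) => [by0 | byn].
  by move: xz; rewrite (proj1 (ann_y_equiv_z bn by0 x) xb) eqxx.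
have e : ann_equiv b y by apply: ann_excess_equiv_y; rewrite /ann_excess bz eqxx.
have xy : x * y = 0 := proj1 (e x) xb.
by move: xz; rewrite mulrC (mul_ann_y_ann_z xy mulzz) eqxx.
Qed.

Lemma nz_zdiv_equiv_y_or_z x : nz_zdiv x -> ann_equiv x y \/ ann_equiv x z.
Proof.
move=> x_zdiv; case: (eqVneq (x * y) 0) => [xy | xyn].
  by right; apply: ann_y_equiv_z => //; case: x_zdiv.
by left; apply: ann_excess_equiv_y; rewrite /ann_excess nz_zdiv_mulz // eqxx.
Qed.

End ProperAnnihilator.

Lemma max_degree_maximal_in_F : (2 < size s)%N -> maximal_in_F y.
Proof.
move=> size_s; split; first by case: hy.
move=> z zn le_yz r rz; case: (eqVneq (r * y) 0) => // ry; exfalso.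
have ex_r : ann_excess z y r by rewrite /ann_excess rz eqxx.
have yz_classes := nz_zdiv_equiv_y_or_z zn le_yz ex_r.
have := size_vertex_reps_le2 hs hy (ann_le_nz_zdiv hy zn le_yz) yz_classes.
by rewrite leqNgt size_s.
Qed.

End MaximalDegree.

Theorem theorem3p6 (R : comNzRingType) (hN : noetherian R)
    (s : seq R) (hs : vertex_reps s) (h2 : (2 < size s)%N)
    (y : R) (hy : nz_zdiv y)
    (hmax : forall z : R, nz_zdiv z -> (vdeg s z <= vdeg s y)%N) :
  maximal_in_F y /\ associated_prime (ann y).
Proof.
have y_max := max_degree_maximal_in_F hs hy hmax h2.
by split=> //; split; [exact: maximal_ann_prime | exists y].
Qed.
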